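(* Let $\mathbf{k}$ be a field, $p\ge3$ an integer, and let $\varphi:\mathbf{k}[e_1,\dots,e_{2p}]\to\mathbf{k}[u_1,\dots,u_p,\alpha]$ be the $\mathbf{k}$-algebra homomorphism with $\varphi(e_i)=u_i$ for $1\le i\le p-1$, $\varphi(e_p)=u_p+\alpha$, $\varphi(e_i)=u_{i-p}\alpha$ for $p+1\le i\le 2p$, and $\mathcal{A}=\operatorname{Im}(\varphi)$. Grade $\mathbf{k}[u_1,\dots,u_p,\alpha]$ by $\mathbb{Z}^p$ with $\deg(u_i)=\epsilon_i$ and $\deg(\alpha)=\epsilon_p$, and fix any monomial order on $\mathbf{k}[u_1,\dots,u_p,\alpha]$ in which $\alpha\prec u_p$. Then for $\underline{d}=(d_1,\dots,d_p)\in\mathbb{Z}_{\ge0}^p$, $$\dim_{\mathbf{k}}(\mathrm{in}(\mathcal{A}))_{\underline{d}}=\begin{cases} d_p+1 & \text{if } d_i>0 \text{ for some } 1\le i\le p-1,\\ 1+\lfloor d_p/2\rfloor & \text{if } d_i=0 \text{ for all } 1\le i\le p-1.\end{cases}$$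
   Context: $\epsilon_i$ denotes the $i$-th standard basis vector of $\mathbb{Z}^p$. The initial algebra $\mathrm{in}(\mathcal{A})$ is the $\mathbf{k}$-span of the leading monomials of the nonzero elements of $\mathcal{A}$; $(\mathrm{in}(\mathcal{A}))_{\underline d}$ is its span of monomials of multidegree $\underline d$. *)

From HB Require Import structures.
From mathcomp Require Import all_boot all_order all_algebra.
From mathcomp Require Import mpoly.
Set Implicit Arguments. Unset Strict Implicit. Unset Printing Implicit Defensive.
Import Order.TTheory GRing.Theory.
Local Open Scope ring_scope.

Record monomial_order (n : nat) (le : rel 'X_{1..n}) : Prop := MonomialOrder {
  mo_refl  : reflexive le;
  mo_anti  : antisymmetric le;
  mo_trans : transitive le;
  mo_total : total le;
  mo_mul   : forall m1 m2 m, le m1 m2 -> le (m1 + m)%MM (m2 + m)%MM;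
  mo_ge0   : forall m, le 0%MM m }.

Definition is_lead_mon (R : nzRingType) (n : nat) (le : rel 'X_{1..n})
  (f : {mpoly R[n]}) (m : 'X_{1..n}) : Prop :=
  m \in msupp f /\ forall m', m' \in msupp f -> le m' m.

Definition kspan (k : fieldType) (n : nat) (P : {mpoly k[n]} -> Prop)
  (q : {mpoly k[n]}) : Prop :=
  exists (s : seq {mpoly k[n]}) (c : seq k),
    (forall x, x \in s -> P x) /\ q = \sum_(i < size s) c`_i *: s`_i.

Definition has_dim (k : fieldType) (n : nat) (S : {mpoly k[n]} -> Prop)
  (r : nat) : Prop :=
  exists b : 'I_r -> {mpoly k[n]},
    [/\ forall i, S (b i),
        forall c : 'I_r -> k, \sum_(i < r) c i *: b i = 0 -> forall i, c i = 0
      & forall q, S q -> exists c : 'I_r -> k, q = \sum_(i < r) c i *: b i].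

(* Variables of k[u_1,...,u_p,alpha]: index i < p (0-based) is u_(i+1),
   index p (= ord_max) is alpha.  Variables of k[e_1,...,e_2p]: index
   j < 2p (0-based) is e_(j+1). *)

Definition phi_gen (k : fieldType) (p : nat) (j : nat) : {mpoly k[p.+1]} :=
  if (j < p.-1)%N then 'X_(inord j)
  else if j == p.-1 then 'X_(inord p.-1) + 'X_(inord p)
  else 'X_(inord (j - p)) * 'X_(inord p).

Definition phi (k : fieldType) (p : nat) (f : {mpoly k[2 * p]})
  : {mpoly k[p.+1]} :=
  comp_mpoly [tuple phi_gen k p j | j < 2 * p] f.

Definition inA (k : fieldType) (p : nat) (q : {mpoly k[p.+1]}) : Prop :=
  exists f : {mpoly k[2 * p]}, q = phi f.

Definition zdeg (p : nat) (m : 'X_{1..p.+1}) (i : 'I_p) : nat :=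
  if i.+1 == p then (m (widen_ord (leqnSn p) i) + m ord_max)%N
  else m (widen_ord (leqnSn p) i).

Definition inA_deg (k : fieldType) (p : nat) (le : rel 'X_{1..p.+1})
  (d : 'I_p -> nat) : {mpoly k[p.+1]} -> Prop :=
  kspan (fun q => exists m : 'X_{1..p.+1},
           [/\ q = 'X_[m], zdeg m =1 d &
               exists a : {mpoly k[p.+1]}, [/\ inA a, a != 0 & is_lead_mon le a m]]).

(* d_p, the last coordinate of d = (d_1, ..., d_p) (0 if p = 0) *)
Definition last_coord (p : nat) : ('I_p -> nat) -> nat :=
  match p with 0 => fun _ => 0%N | q.+1 => fun d => d ord_max end.

(* In multidegree d, the monomials are u_1^d_1 ... u_(p-1)^d_(p-1) u_p^(d_p - j)
   alpha^j with 0 <= j <= d_p.  If some d_i > 0 (i < p), each of them lies in A: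
   u_i and u_i alpha are in A, and alpha^2 = (u_p + alpha) alpha - u_p alpha
   lets u_i absorb any monomial in u_p and alpha.  Otherwise the monomial is
   u_p^(d_p - j) alpha^j; for 2j <= d_p it leads (u_p alpha)^j (u_p + alpha)^(d_p - 2j)
   since alpha < u_p.  Conversely, setting u_1 = ... = u_(p-1) = 0 maps A into
   k[u_p + alpha, u_p alpha], which is symmetric in u_p and alpha, so every
   element of A has equal coefficients on u_p^a alpha^b and u_p^b alpha^a, and a
   leading monomial of that shape must have b <= a. *)

From HB Require Import structures.
From mathcomp Require Import all_boot all_order all_algebra.
From mathcomp Require Import mpoly.
From mathcomp Require Import perm zify ring.
Set Implicit Arguments. Unset Strict Implicit. Unset Printing Implicit Defensive.
Import GRing.Theory.
Local Open Scope ring_scope.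

Section MonomialOrder.
Variables (n : nat) (le : rel 'X_{1..n}) (hle : monomial_order le).

Lemma mo_addl m m1 m2 : le m1 m2 -> le (m + m1)%MM (m + m2)%MM.
Proof. by rewrite ![(m + _)%MM]addmC; apply: mo_mul. Qed.

Lemma mo_add m1 m2 m3 m4 : le m1 m2 -> le m3 m4 -> le (m1 + m3)%MM (m2 + m4)%MM.
Proof. by move=> h12 h34; apply: mo_trans (mo_mul hle _ h12) (mo_addl _ h34). Qed.

Lemma mo_mulmn m1 m2 c : le m1 m2 -> le (m1 *+ c)%MM (m2 *+ c)%MM.
Proof.
move=> h; elim: c => [|c ih]; first by rewrite !mulm0n (mo_refl hle).
by rewrite !mulmS; apply: mo_add.
Qed.

Lemma mo_add_eq m1 m2 m1' m2' : le m1 m1' -> le m2 m2' ->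
  (m1 + m2 = m1' + m2')%MM -> m1 = m1' /\ m2 = m2'.
Proof.
move=> h1 h2 e.
have e2 : m2 = m2'.
  apply: (@addmI _ m1'); apply: (mo_anti hle); apply/andP; split; first exact: mo_addl.
  by rewrite -e mo_mul.
by split=> //; move: e; rewrite e2 => /addIm.
Qed.

End MonomialOrder.

Section LeadingMonomial.
Variables (R : idomainType) (n : nat) (le : rel 'X_{1..n}) (hle : monomial_order le).
Implicit Types (f g : {mpoly R[n]}) (m : 'X_{1..n}).

Lemma is_lead_mon_neq0 f m : is_lead_mon le f m -> f != 0.
Proof. by case=> hm _; apply: contraTneq hm => ->; rewrite msupp0. Qed.

Lemma is_lead_monXm m : is_lead_mon le 'X_[R, m] m.
Proof.
rewrite /is_lead_mon msuppX mem_seq1; split=> // m'; rewrite mem_seq1 => /eqP ->.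
exact: mo_refl.
Qed.

Lemma mcoeffM_msupp f g m : (f * g)@_m =
  \sum_(a <- msupp f) \sum_(b <- msupp g) f@_a * g@_b * ((a + b)%MM == m)%:R.
Proof.
rewrite {1}(mpolyE f) {1}(mpolyE g) mulr_suml raddf_sum; apply: eq_bigr => a _.
rewrite mulr_sumr raddf_sum; apply: eq_bigr => b _.
by rewrite -scalerAl -scalerAr -mpolyXD /= !mcoeffZ mcoeffX mulrA.
Qed.

Lemma is_lead_monM f g mf mg : is_lead_mon le f mf -> is_lead_mon le g mg ->
  is_lead_mon le (f * g) (mf + mg)%MM.
Proof.
move=> [f_mf f_max] [g_mg g_max]; split; last first.
  move=> m /msuppM_le /allpairsP [[a b] /= [ha hb ->]].
  exact: mo_add (f_max _ ha) (g_max _ hb).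
have only_lead a b : a \in msupp f -> b \in msupp g ->
    ((a + b)%MM == (mf + mg)%MM) = (a == mf) && (b == mg).
  move=> ha hb; apply/eqP/andP => [/(mo_add_eq hle (f_max _ ha) (g_max _ hb))|].
    by case=> -> ->.
  by case=> /eqP -> /eqP ->.
rewrite mcoeff_msupp mcoeffM_msupp (bigD1_seq mf) ?msupp_uniq //=.
rewrite (bigD1_seq mg) ?msupp_uniq //= only_lead // !eqxx mulr1.
rewrite big1_seq => [|b /andP [nb hb]]; last first.
  by rewrite only_lead // (negbTE nb) andbF mulr0.
rewrite big1_seq => [|a /andP [na ha]].
  by rewrite !addr0 mulf_neq0 // -mcoeff_msupp.
by rewrite big1_seq // => b /andP [_ hb]; rewrite only_lead // (negbTE na) mulr0.
Qed.

Lemma is_lead_monXn f mf c : is_lead_mon le f mf ->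
  is_lead_mon le (f ^+ c) (mf *+ c)%MM.
Proof.
move=> hf; elim: c => [|c ih]; first by rewrite expr0 mulm0n -mpolyX0; apply: is_lead_monXm.
by rewrite exprS mulmS; apply: is_lead_monM.
Qed.

Lemma is_lead_mon_addX (i j : 'I_n) : i != j -> le U_(j)%MM U_(i)%MM ->
  is_lead_mon le ('X_i + 'X_j : {mpoly R[n]}) U_(i)%MM.
Proof.
move=> nij hji; split=> [|m]; rewrite mcoeff_msupp mcoeffD !mcoeffX.
  by rewrite eqxx eq_mnm1 (eq_sym j) (negbTE nij) addr0 oner_neq0.
case: (eqVneq U_(i)%MM m) => [<- _|ni]; first exact: mo_refl.
by case: (eqVneq U_(j)%MM m) => [<- //|nj]; rewrite addr0 eqxx.
Qed.

End LeadingMonomial.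

Lemma mpolyX_ind (R : ringType) n (P : {mpoly R[n]} -> Prop) :
  P 1 -> (forall i g, P g -> P ('X_i * g)) -> forall m, P 'X_[m].
Proof.
move=> P1 PX m; rewrite mpolyXE_id; elim/big_rec: _ => // i g _ Pg.
by elim: (m i) => [|e IH]; rewrite ?expr0 ?mul1r // exprS -mulrA; apply: PX.
Qed.

Lemma msymXU (R : comRingType) n (s : 'S_n) (i : 'I_n) :
  msym s ('X_i : {mpoly R[n]}) = 'X_(s i).
Proof.
rewrite msymX; congr mpolyX; apply/mnmP => j; rewrite mnmE !mnm1E.
by rewrite -(inj_eq (@perm_inj _ s)) permKV.
Qed.

Lemma lrmorph_mPo (R : comRingType) n l l'
  (f : {lrmorphism {mpoly R[l]} -> {mpoly R[l']}}) (g : {mpoly R[n]}) (t : n.-tuple {mpoly R[l]}) :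
  f (comp_mpoly t g) = comp_mpoly [tuple f (tnth t i) | i < n] g.
Proof.
rewrite !comp_mpolyE linear_sum; apply: eq_bigr => m _.
rewrite linearZ rmorph_prod; congr (_ *: _); apply: eq_bigr => i _.
by rewrite rmorphXn tnth_mktuple.
Qed.

Lemma has_dim_kspan_mpolyX (k : fieldType) n r (P : {mpoly k[n]} -> Prop)
    (mon : 'I_r -> 'X_{1..n}) :
  injective mon -> (forall j, P 'X_[mon j]) ->
  (forall g, P g -> exists j, g = 'X_[mon j]) ->
  has_dim (kspan P) r.
Proof.
move=> mon_inj Pmon monP; exists (fun j => 'X_[mon j]); split.
- move=> j; exists [:: 'X_[mon j]], [:: 1]; split; last by rewrite big_ord1 scale1r.
  by move=> x; rewrite inE => /eqP ->.
- move=> c /(congr1 (mcoeff (mon _))) c0 j; move: (c0 j).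
  rewrite raddf_sum (bigD1 j) //= big1 ?addr0 => [|i nij].
    by rewrite mcoeffZ mcoeffX eqxx mulr1 raddf0.
  by rewrite mcoeffZ mcoeffX (inj_eq mon_inj) (negbTE nij) mulr0.
- move=> g [s [c [Ps ->]]].
  elim/big_ind: _ => [|x y [cx ->] [cy ->]|i _].
  + by exists (fun=> 0); rewrite big1 // => j _; rewrite scale0r.
  + by exists (fun j => cx j + cy j); rewrite -big_split; apply: eq_bigr => j _; rewrite scalerDl.
  + have [j ->] := monP _ (Ps _ (mem_nth 0 (ltn_ord i))).
    exists (fun j' => if j' == j then c`_i else 0).
    by rewrite (bigD1 j) //= eqxx big1 ?addr0 // => j' /negbTE ->; rewrite scale0r.
Qed.

Section InitialAlgebra.
Variables (k : fieldType) (q : nat).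
Local Notation p := q.+1.
Local Notation up := (inord q : 'I_q.+2).
Local Notation al := (ord_max : 'I_q.+2).
Implicit Types (f g : {mpoly k[q.+2]}) (m : 'X_{1..q.+2}).

Lemma up_val : (up : nat) = q. Proof. by rewrite inordK. Qed.

Lemma inord_al : inord q.+1 = al. Proof. by apply: val_inj; rewrite /= inordK. Qed.

Lemma varP (i : 'I_q.+2) : [\/ (i < q)%N, i = up | i = al].
Proof.
case: (ltnP i q) => hi; first by constructor 1.
have := ltn_ord i; case: (eqVneq (i : nat) q) => [iq _|nq lt_i].
  by constructor 2; apply: val_inj; rewrite /= up_val.
by constructor 3; apply: val_inj => /=; lia.
Qed.

Lemma up_neq_al : up != al.
Proof. by rewrite -val_eqE /= up_val; lia. Qed.

Lemma u_neq_up_al (i : 'I_q.+2) : (i < q)%N -> up != i /\ al != i.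
Proof. by move=> hi; split; apply: contraTneq hi => <-; rewrite ?up_val /=; lia. Qed.

Lemma inAM f g : inA f -> inA g -> inA (f * g).
Proof. by move=> [a ->] [b ->]; exists (a * b); rewrite /phi rmorphM. Qed.

Lemma inAB f g : inA f -> inA g -> inA (f - g).
Proof. by move=> [a ->] [b ->]; exists (a - b); rewrite /phi rmorphB. Qed.

Lemma inAX f c : inA f -> inA (f ^+ c).
Proof. by move=> [a ->]; exists (a ^+ c); rewrite /phi rmorphXn. Qed.

Lemma inA_gen j : (j < 2 * p)%N -> inA (phi_gen k p j).
Proof.
move=> hj; exists 'X_(Ordinal hj).
by rewrite /phi comp_mpolyXU -tnth_nth tnth_mktuple.
Qed.

Lemma inA_u (i : 'I_q.+2) : (i < q)%N -> inA ('X_i : {mpoly k[q.+2]}).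
Proof. by move=> hi; have := @inA_gen i; rewrite /phi_gen /= hi inord_val; apply; lia. Qed.

Lemma inA_S : inA ('X_up + 'X_al : {mpoly k[q.+2]}).
Proof. by have := @inA_gen q; rewrite /phi_gen /= ltnn eqxx inord_al; apply; lia. Qed.

Lemma inA_Xal (i : 'I_q.+2) : (i <= q)%N -> inA ('X_i * 'X_al : {mpoly k[q.+2]}).
Proof.
move=> hi; have := @inA_gen (i + p)%N; rewrite /phi_gen /= addnK inord_val inord_al.
have -> : (i + p < q)%N = false by lia.
have -> : (i + p == q)%N = false by apply/eqP; lia.
by apply; lia.
Qed.

Lemma inA_mulX_mpolyX (w : 'I_q.+2) m : (w < q)%N -> inA ('X_w * 'X_[k, m]).
Proof.
move=> hw; suff : inA ('X_w * 'X_[k, m]) /\ inA ('X_w * 'X_al * 'X_[k, m]) by case.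
have up_le : (up <= q)%N by rewrite up_val.
move: m; apply: (mpolyX_ind
  (P := fun g : {mpoly k[q.+2]} => inA ('X_w * g) /\ inA ('X_w * 'X_al * g))).
  by rewrite !mulr1; split; [apply: inA_u | apply: inA_Xal; lia].
move=> i g [wg wag]; case: (varP i) => [hi|->|->].
- by split; rewrite mulrCA; apply: inAM => //; apply: inA_u.
- split.
    have -> : 'X_w * ('X_up * g) = ('X_up + 'X_al) * ('X_w * g) - 'X_w * 'X_al * g.
      by ring.
    by apply: inAB => //; apply: inAM => //; apply: inA_S.
  have -> : 'X_w * 'X_al * ('X_up * g) = 'X_up * 'X_al * ('X_w * g) by ring.
  by apply: inAM => //; apply: inA_Xal.
- split; first by rewrite mulrA.
  have -> : 'X_w * 'X_al * ('X_al * g) =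
      ('X_up + 'X_al) * ('X_w * 'X_al * g) - 'X_up * 'X_al * ('X_w * g) by ring.
  by apply: inAB; apply: inAM => //; [apply: inA_S | apply: inA_Xal].
Qed.

Lemma inA_mpolyX m (w : 'I_q.+2) : (w < q)%N -> (0 < m w)%N ->
  inA ('X_[m] : {mpoly k[q.+2]}).
Proof.
move=> hw mw; have le_m : (U_(w) <= m)%MM by rewrite lep1mP -lt0n.
by rewrite -(submK le_m) addmC mpolyXD; apply: inA_mulX_mpolyX.
Qed.

Definition kill_u_subst : (q.+2).-tuple {mpoly k[q.+2]} :=
  [tuple if (i < q)%N then 0 else 'X_i | i < q.+2].
Local Notation kill_u := (comp_mpoly kill_u_subst).

Definition u_free m : bool := [forall i : 'I_q.+2, (i < q)%N ==> (m i == 0%N)].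

Lemma kill_uXU (i : 'I_q.+2) : kill_u 'X_i = if (i < q)%N then 0 else 'X_i.
Proof. by rewrite comp_mpolyXU -tnth_nth tnth_mktuple. Qed.

Lemma kill_uX m : kill_u 'X_[m] = if u_free m then 'X_[m] else 0.
Proof.
rewrite comp_mpolyX; case: ifP => [/forallP m_free|/negbT/forallPn [i]].
  rewrite [RHS]mpolyXE_id; apply: eq_bigr => i _; rewrite tnth_mktuple.
  by case: ifP => // hi; move/implyP/(_ hi)/eqP: (m_free i) => ->; rewrite !expr0.
rewrite negb_imply => /andP [hi mi].
by rewrite (bigD1 i) //= tnth_mktuple hi expr0n (negbTE mi) mul0r.
Qed.

Lemma mcoeff_kill_u f m : u_free m -> (kill_u f)@_m = f@_m.
Proof.
move=> m_free; rewrite (mpolyE f) (raddf_sum kill_u) !raddf_sum /=.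
apply: eq_bigr => m' _; rewrite comp_mpolyZ kill_uX !mcoeffZ.
by case: ifP => // m'_free; rewrite mcoeffX mcoeff0; case: eqP m'_free => // ->; rewrite m_free.
Qed.

Local Notation swap := (tperm up al).

Lemma msym_swap_kill_u_gen j : (j < 2 * p)%N ->
  msym swap (kill_u (phi_gen k p j)) = kill_u (phi_gen k p j).
Proof.
move=> hj; rewrite /phi_gen /=; case: ltnP => [lt_jq|le_qj].
  by rewrite kill_uXU inordK ?lt_jq ?raddf0 //; lia.
have up_nlow : (up < q)%N = false by rewrite up_val ltnn.
have al_nlow : (al < q)%N = false by rewrite /=; lia.
rewrite inord_al; case: eqP => _.
  by rewrite !raddfD /= !kill_uXU up_nlow al_nlow !msymXU tpermL tpermR addrC.
rewrite rmorphM /= !kill_uXU al_nlow; case: ifP => [_|]; first by rewrite mul0r raddf0.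
rewrite inordK; last by lia.
move=> /negbT le_q; have -> : (inord (j - p) : 'I_q.+2) = up.
  by apply: val_inj; rewrite /= !inordK; lia.
by rewrite msymM !msymXU tpermL tpermR mulrC.
Qed.

Lemma msym_swap_kill_u f : inA f -> msym swap (kill_u f) = kill_u f.
Proof.
case=> g ->; rewrite /phi (lrmorph_mPo kill_u) (lrmorph_mPo (msym swap)).
congr comp_mpoly; apply: eq_from_tnth => j; rewrite !tnth_mktuple.
exact: msym_swap_kill_u_gen.
Qed.

Lemma mcoeff_swap f m : inA f -> u_free m ->
  f@_[multinom m (swap i) | i < q.+2] = f@_m.
Proof.
move=> fA m_free; have mt_free : u_free [multinom m (swap i) | i < q.+2].
  apply/forallP => i; apply/implyP => hi.
  have [up_i al_i] := u_neq_up_al hi.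
  by rewrite mnmE tpermD // (implyP (forallP m_free i)).
by rewrite -(mcoeff_kill_u f mt_free) -(mcoeff_kill_u f m_free) -mcoeff_sym msym_swap_kill_u.
Qed.

Definition deg_mon (d : 'I_p -> nat) (j : nat) : 'X_{1..q.+2} :=
  [multinom if (i < q)%N then d (inord i) else if i == al then j else (d ord_max - j)%N
  | i < q.+2].

Lemma deg_mon_al d j : deg_mon d j al = j.
Proof. by rewrite mnmE eqxx /=; case: ltnP => //; lia. Qed.

Lemma zdeg_top m : zdeg m ord_max = (m up + m al)%N.
Proof. by rewrite /zdeg /= eqxx; congr (m _ + _)%N; apply: val_inj; rewrite /= inordK. Qed.

Lemma zdeg_u m (i : 'I_p) : (i < q)%N -> zdeg m i = m (widen_ord (leqnSn _) i).
Proof. by move=> hi; rewrite /zdeg eqSS (ltn_eqF hi). Qed.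

Lemma zdeg_deg_mon d j : (j <= d ord_max)%N -> zdeg (deg_mon d j) =1 d.
Proof.
move=> hj i; case: (ltnP i q) => hi; first by rewrite zdeg_u // mnmE /= hi inord_val.
have -> : i = ord_max by apply: val_inj => /=; have := ltn_ord i; lia.
by rewrite zdeg_top deg_mon_al mnmE up_val ltnn (negbTE up_neq_al) subnK.
Qed.

Lemma zdeg_deg_monP d m : zdeg m =1 d -> m = deg_mon d (m al) /\ (m al <= d ord_max)%N.
Proof.
move=> hz; have := zdeg_top m; rewrite hz => top; split; last by lia.
apply/mnmP => i; rewrite mnmE; case: (varP i) => [hi|->|->].
- rewrite hi -hz zdeg_u; last by rewrite inordK //; lia.
  by congr (m _); apply: val_inj; rewrite /= inordK //; lia.
- by rewrite up_val ltnn (negbTE up_neq_al); lia.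
- by rewrite eqxx /=; case: ltnP => //; lia.
Qed.

Variables (le : rel 'X_{1..q.+2}) (hle : monomial_order le)
  (halpha : le U_(al)%MM U_(up)%MM).

Lemma lead_u_free_le f m : inA f -> is_lead_mon le f m -> u_free m -> (m al <= m up)%N.
Proof.
move=> fA [m_in m_max] m_free; set mt := [multinom m (swap i) | i < q.+2].
have mt_le : le mt m by apply: m_max; rewrite mcoeff_msupp mcoeff_swap // -mcoeff_msupp.
rewrite leqNgt; apply/negP => lt_up_al; set c := (m al - m up)%N.
have c_le : (U_(al) *+ c <= m)%MM.
  by apply/mnm_lepP => i; rewrite mulmnE mnm1E; case: eqP => [<-|]; lia.
set b := (m - U_(al) *+ c)%MM.
have mE : m = (b + U_(al) *+ c)%MM by rewrite submK.
have mtE : mt = (b + U_(up) *+ c)%MM.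
  apply/mnmP => i; rewrite !(mnmE, mnmDE, mnmBE, mulmnE, mnm1E).
  case: (varP i) => [hi|->|->].
  - by have [ui ai] := u_neq_up_al hi; rewrite tpermD // (negbTE ui) (negbTE ai); lia.
  - by rewrite tpermL eqxx eq_sym (negbTE up_neq_al); lia.
  - by rewrite tpermR eqxx (negbTE up_neq_al); lia.
have : m = mt by apply: (mo_anti hle); rewrite mt_le andbT mE mtE mo_addl // mo_mulmn.
by move/mnmP/(_ al); rewrite /mt mnmE tpermR; lia.
Qed.

Definition initial_mon m : Prop :=
  exists a : {mpoly k[q.+2]}, [/\ inA a, a != 0 & is_lead_mon le a m].

Lemma initial_mpolyX m : inA ('X_[m] : {mpoly k[q.+2]}) -> initial_mon m.
Proof.
move=> mA; have lead := is_lead_monXm k hle m.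
by exists 'X_[m]; split => //; apply: is_lead_mon_neq0 lead.
Qed.

Lemma initial_deg_mon_sym d j : (forall i : 'I_p, (i < q)%N -> d i = 0%N) ->
  (j.*2 <= d ord_max)%N -> initial_mon (deg_mon d j).
Proof.
move=> d_u hj.
set T : {mpoly k[q.+2]} := 'X_up * 'X_al; set S : {mpoly k[q.+2]} := 'X_up + 'X_al.
have lead : is_lead_mon le (T ^+ j * S ^+ (d ord_max - j.*2))
    ((U_(up) + U_(al)) *+ j + U_(up) *+ (d ord_max - j.*2))%MM.
  apply: (is_lead_monM hle); apply: (is_lead_monXn hle).
    by rewrite /T -mpolyXD; apply: is_lead_monXm.
  by rewrite /S; apply: (is_lead_mon_addX k hle up_neq_al halpha).
have -> : deg_mon d j = ((U_(up) + U_(al)) *+ j + U_(up) *+ (d ord_max - j.*2))%MM.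
  apply/mnmP => i; rewrite !(mnmE, mnmDE, mulmnE, mnm1E); case: (varP i) => [hi|->|->].
  - have [ui ai] := u_neq_up_al hi.
    by rewrite hi d_u ?inordK ?(negbTE ui) ?(negbTE ai) //=; lia.
  - by rewrite up_val ltnn eqxx (negbTE up_neq_al) eq_sym (negbTE up_neq_al) /=; lia.
  - by rewrite eqxx (negbTE up_neq_al) /=; case: ltnP => //; lia.
exists (T ^+ j * S ^+ (d ord_max - j.*2)); split; last exact: lead.
  by apply: inAM; apply: inAX; [apply: inA_Xal; rewrite up_val | apply: inA_S].
exact: is_lead_mon_neq0 lead.
Qed.

Lemma initial_alpha_le_half d m : (forall i : 'I_p, (i < q)%N -> d i = 0%N) ->
  zdeg m =1 d -> initial_mon m -> ((m al).*2 <= d ord_max)%N.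
Proof.
move=> d_u hz [a [aA _ lead]].
have m_free : u_free m.
  apply/forallP => i; apply/implyP => hi; have [-> _] := zdeg_deg_monP hz.
  by rewrite mnmE hi d_u // inordK //; lia.
have := lead_u_free_le aA lead m_free; have := zdeg_top m; rewrite hz; lia.
Qed.

Theorem dim_inA_deg d : has_dim (inA_deg (k := k) le d)
  (if [exists i : 'I_p, (i.+1 < p)%N && (0 < d i)%N]
   then (d ord_max).+1 else ((d ord_max)./2).+1).
Proof.
have deg_mon_inj r : injective (fun j : 'I_r => deg_mon d j).
  by move=> j1 j2 /(congr1 (fun m => m al)); rewrite !deg_mon_al => /val_inj.
case: ifP => [/existsP [w /andP [hw dw]] | /negbT/existsPn d_u].
- apply: has_dim_kspan_mpolyX (deg_mon_inj _) _ _ => [j|_ [m [-> /zdeg_deg_monP [mE m_al] _]]].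
    exists (deg_mon d j); split => //; first by apply: zdeg_deg_mon; rewrite -ltnS.
    apply: initial_mpolyX; apply: (@inA_mpolyX _ (widen_ord (leqnSn _) w)) => /=; first by lia.
    by rewrite mnmE /= (hw : (w < q)%N) inord_val.
  by exists (Ordinal (m_al : m al < (d ord_max).+1)%N); rewrite {1}mE.
- have d_u' (i : 'I_p) : (i < q)%N -> d i = 0%N.
    by move=> hi; move: (d_u i); rewrite ltnS hi /=; lia.
  apply: has_dim_kspan_mpolyX (deg_mon_inj _) _ _ => [j|_ [m [-> hz m_init]]].
    exists (deg_mon d j); split => //; first by apply: zdeg_deg_mon; have := ltn_ord j; lia.
    by apply: initial_deg_mon_sym => //; have := ltn_ord j; lia.
  have [mE _] := zdeg_deg_monP hz; have := initial_alpha_le_half d_u' hz m_init => m_al.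
  have m_al' : (m al < (d ord_max)./2.+1)%N by lia.
  by exists (Ordinal m_al'); rewrite {1}mE.
Qed.

End InitialAlgebra.

Theorem corollary6p4 (k : fieldType) (p : nat) (hp : (3 <= p)%N)
  (le : rel 'X_{1..p.+1}) (hle : monomial_order le)
  (halpha : le U_(ord_max)%MM U_(inord p.-1)%MM /\
            U_(ord_max)%MM != U_(inord p.-1)%MM :> 'X_{1..p.+1})
  (d : 'I_p -> nat) :
  has_dim (inA_deg (k := k) le d)
    (if [exists i : 'I_p, (i.+1 < p)%N && (0 < d i)%N]
     then (last_coord d).+1
     else ((last_coord d)./2).+1).
Proof.
case: p hp le hle halpha d => [//|q] _ le hle [halpha _] d.
exact: dim_inA_deg hle halpha d.
Qed.
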